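(* Let $p$ be prime and $H\le\mathrm{S}_n$ be in $\mathfrak{InP}(\mathrm{C}_p)$, with $B$, $\gamma$, $M$ and the standard generators as in the context. Let $b\in N_B(H)$ and let $x,y$ be standard generators of $H$ whose supports are not disjoint. Then there exists $a\in\mathbb{F}_p^*$ such that $x^b=x^a$ and $y^b=y^a$.
   Context: $H\le\mathrm{S}_{n}$, $n=pk$, has orbits $\Omega_1,\dots,\Omega_k$ of size $p$ with each $G_i:=H|_{\Omega_i}$ cyclic of order $p$; $|H|=p^s$ and the orbits are ordered so that $|H|_{\Omega_1\cup\dots\cup\Omega_s}|=p^s$. $G=G_1\times\dots\times G_k$, $g_i$ generates $G_i$ (chosen as conjugates of $g_1$ via bijections witnessing permutation isomorphisms $G_1\to G_i$), and $\gamma:G\to\mathbb{F}_p^k$ is $\gamma(g_1^{r_1}\cdots g_k^{r_k})=(r_1,\dots,r_k)$, with $\mathbb{F}_p$ identified with $\{0,\dots,p-1\}$. $B=\langle N_{\mathrm{Sym}(\Omega_i)}(G_i)\rangle$. $M\in\mathrm{M}(s,k,p)$ is the generator matrix of $\gamma(H)$ in standard form (its first $s$ columns form the identity $I_s$), and the standard generators of $H$ are $x_i=\gamma^{-1}(M_{i,*})$, $1\le i\le s$, where $M_{i,*}$ is the $i$-th row. The support of a permutation is its set of moved points. *)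

From HB Require Import structures.
From mathcomp Require Import all_boot all_order all_algebra all_fingroup all_solvable.
Set Implicit Arguments. Unset Strict Implicit. Unset Printing Implicit Defensive.

(* Permutations of {0,...,n-1}: S_n = {perm 'I_n}; mathcomp conventions:
   x ^ b = b^-1 * x * b (conjugation), composition left to right. *)

Definition psupp (n : nat) (x : {perm 'I_n}) : {set 'I_n} := [set t | x t != t].

(* the restriction H|_S of H to a set S (S invariant under H),
   realised as permutations of 'I_n fixing every point outside S *)
Definition restrG (n : nat) (S : {set 'I_n}) (H : {set {perm 'I_n}})
  : {set {perm 'I_n}} := (restr_perm S @* H)%g.

(* gamma^{-1} : F_p^k -> G,  (r_1,...,r_k) |-> g_1^{r_1} ... g_k^{r_k},
   with F_p identified with {0,...,p-1} *)
Definition gamma_inv (n k p : nat) (g : 'I_k -> {perm 'I_n}) (v : 'rV['F_p]_k)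
  : {perm 'I_n} := (\prod_(j < k) g j ^+ (nat_of_ord (v ord0 j)))%g.

Definition std_gen (n k p s : nat) (g : 'I_k -> {perm 'I_n})
  (M : 'M['F_p]_(s, k)) (i : 'I_s) : {perm 'I_n} := gamma_inv g (row i M).

Definition Bgroup (n k : nat) (Om : 'I_k -> {set 'I_n}) (H : {set {perm 'I_n}})
  : {set {perm 'I_n}} :=
  << \bigcup_(i < k) 'N_(perm.Sym (Om i))(restrG (Om i) H) >>%g.

From HB Require Import structures.
From mathcomp Require Import all_boot all_order all_algebra all_fingroup all_solvable.

(* The orbits Omega_j are disjoint and g_j is supported on Omega_j, so the g_j
   commute and gamma^{-1} is a homomorphism.  Every generator of B normalises
   one G_i and centralises the others, so b normalises each G_j = <g_j> and
   acts on it as g_j |-> g_j^{a_j} with a_j in F_p^*; hence conjugation by b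
   is gamma^{-1}(v) |-> gamma^{-1}(v diag(a)).  Since H^b = H, the row
   M_i diag(a) lies in the row space of M, and the identity block of the
   standard form forces M_i diag(a) = a_i M_i, i.e. a_j = a_i wherever
   M_ij != 0.  A point moved by both x_i and x_i' lies in some Omega_j with
   M_ij, M_i'j both nonzero, so a_i = a_j = a_i' is the common exponent. *)

Set Implicit Arguments. Unset Strict Implicit. Unset Printing Implicit Defensive.
Import GRing.Theory.
Local Open Scope ring_scope.

Lemma orbit_disjoint (aT : finGroupType) (rT : finType) (to : {action aT &-> rT})
    (G : {group aT}) x y :
  orbit to G x != orbit to G y -> [disjoint orbit to G x & orbit to G y].
Proof.
move=> neq_xy; apply/pred0P => u /=; apply/negbTE/andP => -[/orbit_eqP ux /orbit_eqP uy].
by move: neq_xy; rewrite -ux -uy eqxx.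
Qed.

Lemma perm_on_disjoint_commute (T : finType) (A B : {set T}) (f h : {perm T}) :
  perm_on A f -> perm_on B h -> [disjoint A & B] -> commute f h.
Proof.
move=> fA hB dAB; apply/permP => t; rewrite !permM.
have outB u : u \in A -> h u = u by move=> uA; rewrite (out_perm hB) ?(disjointFr dAB).
have outA u : u \in B -> f u = u.
  by move=> uB; rewrite (out_perm fA) // (disjointFl dAB).
case: (boolP (t \in A)) => tA; first by rewrite !outB ?(perm_closed _ fA).
rewrite (out_perm fA tA); case: (boolP (t \in B)) => tB.
  by rewrite outA ?(perm_closed _ hB).
by rewrite (out_perm hB tB) (out_perm fA tA).
Qed.

Lemma restrG_perm_on n (S : {set 'I_n}) (H : {set {perm 'I_n}}) h :
  h \in restrG S H -> perm_on S h.
Proof. by case/morphimP => z _ _ ->; apply: restr_perm_on. Qed.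

Lemma Bgroup_norm n k (Om : 'I_k -> {set 'I_n}) (H : {set {perm 'I_n}}) j :
  (forall i j, i != j -> [disjoint Om i & Om j]) ->
  (Bgroup Om H \subset 'N(restrG (Om j) H))%g.
Proof.
move=> Om_disj; rewrite gen_subG; apply/bigcupsP => i _.
apply/subsetP => c /setIP[cSym cN]; case: (eqVneq i j) => [<- // | neq_ij].
apply: (subsetP (cent_sub _)); apply/centP => h hG; rewrite inE in cSym.
exact: perm_on_disjoint_commute cSym (restrG_perm_on hG) (Om_disj _ _ neq_ij).
Qed.

Lemma perm_prod_fix (T : finType) I (r : seq I) (P : pred I) (F : I -> {perm T}) t :
  (forall i, P i -> F i t = t) -> (\prod_(i <- r | P i) F i)%g t = t.
Proof.
move=> Ft; elim/big_ind: _ => [|f h ft ht|//]; first by rewrite perm1.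
by rewrite permM ft ht.
Qed.

Section FpExponents.

Variables (gT : finGroupType) (p : nat).
Hypothesis p_pr : prime p.

Lemma expg_Fp_nat (x : gT) m : #[x]%g = p -> (x ^+ (m%:R : 'F_p) = x ^+ m)%g.
Proof. by move=> ox; rewrite val_Fp_nat // -[X in (_ %% X)%N]ox expg_mod_order. Qed.

Lemma expg_Fp_mul (x : gT) (u v : 'F_p) :
  #[x]%g = p -> (x ^+ ((u * v)%R : 'F_p) = x ^+ (u * v)%N)%g.
Proof.
by move=> ox; rewrite -[u in LHS]natr_Zp -[v in LHS]natr_Zp -natrM expg_Fp_nat.
Qed.

Lemma prodgXn_commute I (r : seq I) (F : I -> gT) m :
  (forall i j, commute (F i) (F j)) ->
  ((\prod_(i <- r) F i) ^+ m = \prod_(i <- r) F i ^+ m)%g.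
Proof.
move=> FC; elim: r => [|i r IHr]; first by rewrite !big_nil expg1n.
by rewrite !big_cons expgMn ?IHr //; apply: commute_prod.
Qed.

Lemma norm_cycle_prime_conj (x b : gT) :
  #[x]%g = p -> b \in 'N(<[x]>)%g ->
  exists2 a : 'F_p, a != 0 & (x ^ b = x ^+ (a : nat))%g.
Proof.
move=> ox bN; have /cycleP[m xb] : (x ^ b)%g \in <[x]>%g by rewrite memJ_norm ?cycle_id.
have xbm : (x ^ b = x ^+ ((m%:R : 'F_p) : nat))%g by rewrite expg_Fp_nat.
exists m%:R => //; apply: contraPneq xbm => ->.
rewrite expg0 => /eqP; rewrite conjg_eq1 => /eqP x1.
by move: ox (prime_gt1 p_pr); rewrite x1 order1 => <-.
Qed.

End FpExponents.

Section GammaInverse.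

Variables (p k n : nat) (Om : 'I_k -> {set 'I_n}) (g : 'I_k -> {perm 'I_n}).
Hypotheses (p_pr : prime p) (Om_disj : forall i j, i != j -> [disjoint Om i & Om j]).
Hypotheses (g_on : forall j, perm_on (Om j) (g j)) (g_order : forall j, #[g j]%g = p).

Lemma gen_commute i j : commute (g i) (g j).
Proof.
case: (eqVneq i j) => [-> // | neq_ij].
exact: perm_on_disjoint_commute (g_on i) (g_on j) (Om_disj neq_ij).
Qed.

Lemma gamma_invZ (c : 'F_p) (v : 'rV['F_p]_k) :
  gamma_inv g (c *: v) = (gamma_inv g v ^+ c)%g.
Proof.
rewrite /gamma_inv prodgXn_commute; last by move=> i j; apply/commuteX2/gen_commute.
by apply: eq_bigr => j _; rewrite mxE expg_Fp_mul // -expgM mulnC.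
Qed.

Lemma gamma_inv_conj b (d v : 'rV['F_p]_k) :
  (forall j, g j ^ b = g j ^+ d ord0 j)%g ->
  (gamma_inv g v ^ b)%g = gamma_inv g (v *m diag_mx d).
Proof.
move=> gb; rewrite /gamma_inv conjg_prod; apply: eq_bigr => j _.
by rewrite mul_mx_diag mxE expg_Fp_mul // conjXg gb -expgM mulnC.
Qed.

Lemma norm_cycles_conj_diag b :
  (forall j, b \in 'N(<[g j]>)%g) ->
  exists2 d : 'rV['F_p]_k,
    forall j, d ord0 j != 0 & forall j, (g j ^ b = g j ^+ d ord0 j)%g.
Proof.
move=> bN; have /all_sig2[a a_nz ga] j : {a : 'F_p | a != 0 & (g j ^ b = g j ^+ a)%g}.
  exact/sig2_eqW/(norm_cycle_prime_conj p_pr (g_order j) (bN j)).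
by exists (\row_j a j) => j; rewrite mxE.
Qed.

Lemma gamma_inv_moved (v : 'rV['F_p]_k) j t :
  t \in Om j -> gamma_inv g v t != t -> v ord0 j != 0.
Proof.
move=> tOm; apply: contraNneq => v0; rewrite perm_prod_fix // => l _.
rewrite permX; case: (eqVneq l j) => [-> | neq_lj]; first by rewrite v0.
by apply: iter_fix; rewrite (out_perm (g_on l)) // (disjointFl (Om_disj neq_lj)).
Qed.

End GammaInverse.

Section StandardForm.

Variables (F : fieldType) (s k : nat) (M : 'M[F]_(s, k)) (sk : (s <= k)%N).
Hypothesis M_std : forall (i : 'I_s) (j : 'I_k), (j < s)%N -> M i j = ((i : nat) == j)%:R.

Lemma std_form_widen i l : M i (widen_ord sk l) = (i == l)%:R.
Proof. by rewrite M_std /=. Qed.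

Lemma submx_std_form (w : 'rV[F]_k) :
  (w <= M)%MS -> w = \sum_(l < s) w ord0 (widen_ord sk l) *: row l M.
Proof.
case/submxP => D ->; rewrite {1}mulmx_sum_row; apply: eq_bigr => l _; congr (_ *: _).
rewrite !mxE (bigD1 l) //= std_form_widen eqxx mulr1 big1 ?addr0 // => m neq_ml.
by rewrite std_form_widen (negbTE neq_ml) mulr0.
Qed.

Lemma std_form_row_diag (d : 'rV[F]_k) (i : 'I_s) :
  (row i M *m diag_mx d <= M)%MS ->
  row i M *m diag_mx d = d ord0 (widen_ord sk i) *: row i M.
Proof.
move/submx_std_form => ->; rewrite (bigD1 i) //= big1 ?addr0 => [|l neq_li].
  by rewrite mul_mx_diag !mxE std_form_widen eqxx mul1r.
by rewrite mul_mx_diag !mxE std_form_widen eq_sym (negbTE neq_li) mul0r scale0r.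
Qed.

End StandardForm.

Theorem lemma4p8 (p k n s : nat) (H : {group {perm 'I_n}})
  (Om : 'I_k -> {set 'I_n}) (g : 'I_k -> {perm 'I_n}) (M : 'M['F_p]_(s, k))
  (b x y : {perm 'I_n}) :
  prime p ->
  n = (p * k)%N ->
  (* Omega_1, ..., Omega_k are the (pairwise distinct) orbits of H, each of size p *)
  injective Om ->
  (forall i, exists t, Om i = orbit 'P%act H t) ->
  (forall t, exists i, t \in Om i) ->
  (forall i, #|Om i| = p) ->
  (* each G_i := H|_{Omega_i} is cyclic of order p *)
  (forall i, cyclic (restrG (Om i) H) /\ #|restrG (Om i) H| = p) ->
  (* |H| = p^s and |H|_{Omega_1 u ... u Omega_s}| = p^s *)
  #|H| = (p ^ s)%N ->
  #|restrG (\bigcup_(i < k | (i < s)%N) Om i) H| = (p ^ s)%N ->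
  (* g_i generates G_i, the g_i being conjugates of one another via bijections
     witnessing permutation isomorphisms G_i -> G_j *)
  (forall i, <[g i]>%g = restrG (Om i) H) ->
  (forall i j, exists f : {perm 'I_n},
      [/\ [set f t | t in Om i] = Om j,
          (restrG (Om i) H :^ f)%g = restrG (Om j) H &
          g j = (g i ^ f)%g]) ->
  (* M is a generator matrix of gamma(H) in standard form *)
  row_free M ->
  (forall v : 'rV['F_p]_k, (v <= M)%MS = (gamma_inv g v \in H)) ->
  (forall (i : 'I_s) (j : 'I_k), (j < s)%N -> M i j = ((i : nat) == j)%:R%R) ->
  (* b in N_B(H); x, y standard generators with non-disjoint supports *)
  b \in ('N_(Bgroup Om H)(H))%g ->
  (exists i, x = std_gen g M i) ->
  (exists j, y = std_gen g M j) ->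
  ~~ [disjoint psupp x & psupp y] ->
  exists a : 'F_p, a != 0%R /\ (x ^ b = x ^+ (a : nat) /\ y ^ b = y ^+ (a : nat))%g.
Proof.
move=> p_pr _ Om_inj Om_orb Om_cover _ G_cyc _ _ gG _ M_free M_span M_std
  /setIP[bB bNH] [i1 ->] [i2 ->] /pred0Pn[t /andP[t1 t2]].
have Om_disj i j : i != j -> [disjoint Om i & Om j].
  move=> neq_ij; have [[ti Ei] [tj Ej]] := (Om_orb i, Om_orb j).
  by rewrite Ei Ej orbit_disjoint // -Ei -Ej (inj_eq Om_inj).
have g_on j : perm_on (Om j) (g j) by apply: (restrG_perm_on (H := H)); rewrite -gG cycle_id.
have g_order j : #[g j]%g = p by rewrite /order gG; case: (G_cyc j).
have bN j : b \in 'N(<[g j]>)%g by rewrite gG (subsetP (Bgroup_norm H j Om_disj)).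
have [d d_nz gb] := norm_cycles_conj_diag p_pr g_order bN.
have sk : (s <= k)%N by rewrite -(eqP M_free) rank_leq_col.
have row_diag i : row i M *m diag_mx d = d ord0 (widen_ord sk i) *: row i M.
  apply: (std_form_row_diag sk M_std).
  by rewrite M_span -(gamma_inv_conj p_pr g_order _ gb) memJ_norm // -M_span row_sub.
have [j tj] := Om_cover t.
have d_eq i : std_gen g M i t != t -> d ord0 j = d ord0 (widen_ord sk i).
  move=> /(gamma_inv_moved Om_disj g_on tj); rewrite mxE => Mij.
  by have /rowP/(_ j) := row_diag i; rewrite mul_mx_diag !mxE mulrC; apply: mulIf.
have conj_std i : std_gen g M i t != t -> (std_gen g M i ^ b = std_gen g M i ^+ d ord0 j)%g.
  move=> /d_eq di; rewrite /std_gen (gamma_inv_conj p_pr g_order _ gb).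
  by rewrite row_diag -di (gamma_invZ p_pr Om_disj g_on g_order).
by exists (d ord0 j); rewrite d_nz !conj_std //; rewrite !inE in t1 t2.
Qed.
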